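(* Let $\omega_s>0$, $R_s>0$, $R_r>0$, $L_s>0$, $L_r>0$, $L_m>0$ with $L_s>L_m$ and $L_r>L_m$, and let $\sigma=1-\frac{L_m^2}{L_sL_r}$. Let $$A=\begin{bmatrix} -\frac{R_s}{\sigma L_s} & \omega_s & \frac{R_sL_m}{\sigma L_sL_r} & 0 \\ -\omega_s & -\frac{R_s}{\sigma L_s} & 0 & \frac{R_sL_m}{\sigma L_sL_r}\\ \frac{R_rL_m}{\sigma L_sL_r} & 0 & -\frac{R_r}{\sigma L_r} & \omega_s \\ 0 & \frac{R_rL_m}{\sigma L_sL_r} & -\omega_s & -\frac{R_r}{\sigma L_r} \end{bmatrix},\qquad B=\begin{bmatrix}0_{2\times2}\\ I_{2\times 2}\end{bmatrix},$$ and let $K\in\mathbb{R}^{2\times 4}$ be any matrix such that $A-BK$ is asymptotically stable (all eigenvalues have negative real part). Write $(A-BK)^{-1}=[d_{ij}]_{i,j=1}^4$ and define $$q_1=\tfrac{L_m}{\sigma L_sL_r}(d_{13}d_{43}-d_{23}d_{33}),\quad q_2=\tfrac{1}{2}\tfrac{L_m}{\sigma L_sL_r}(d_{13}d_{44}+d_{14}d_{43}-d_{23}d_{34}-d_{24}d_{33}),\quad q_3=\tfrac{L_m}{\sigma L_sL_r}(d_{14}d_{44}-d_{24}d_{34}).$$ Then the matrix $\begin{bmatrix}q_1&q_2\\ q_2&q_3\end{bmatrix}$ is positive definite.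
   Context: This matrix is the Hessian (up to a factor 2) of the quadratic map $u=(u_1,u_2)\mapsto T_e(u)=\frac{L_m}{\sigma L_sL_r}(x_1x_4-x_2x_3)$, where $x=-(A-BK)^{-1}[v_{ds}\;v_{qs}\;u_1\;u_2]^T$ for fixed real constants $v_{ds},v_{qs}$; i.e. $T_e(u)=u^T\begin{bmatrix}q_1&q_2\\ q_2&q_3\end{bmatrix}u+b^Tu+a$ for some constants $b\in\mathbb{R}^2$, $a\in\mathbb{R}$. (This models the electromagnetic torque of a doubly fed induction generator at the steady state of its feedback-linearized electrical dynamics.) *)

(* Real numbers are modelled as the real elements (x \is Num.real)
   of an arbitrary numClosedFieldType R (e.g. the complex numbers); eigenvalues of
   the real matrix A - B K are then taken in R (its "complex" eigenvalues). *)
From HB Require Import structures.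
From mathcomp Require Import all_boot all_order all_algebra.
Set Implicit Arguments. Unset Strict Implicit. Unset Printing Implicit Defensive.
Import Order.TTheory GRing.Theory Num.Theory.
Local Open Scope ring_scope.

Section DFIG.
Variable R : numClosedFieldType.

Definition sigma (Ls Lr Lm : R) : R := 1 - Lm ^+ 2 / (Ls * Lr).

Definition Amat (ws Rs Rr Ls Lr Lm : R) : 'M[R]_4 :=
  let s := sigma Ls Lr Lm in
  \matrix_(i < 4, j < 4)
    match nat_of_ord i, nat_of_ord j with
    | 0, 0 => - (Rs / (s * Ls))
    | 0, 1 => ws
    | 0, 2 => Rs * Lm / (s * Ls * Lr)
    | 1, 0 => - ws
    | 1, 1 => - (Rs / (s * Ls))
    | 1, 3 => Rs * Lm / (s * Ls * Lr)
    | 2, 0 => Rr * Lm / (s * Ls * Lr)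
    | 2, 2 => - (Rr / (s * Lr))
    | 2, 3 => ws
    | 3, 1 => Rr * Lm / (s * Ls * Lr)
    | 3, 2 => - ws
    | 3, 3 => - (Rr / (s * Lr))
    | _, _ => 0
    end.

Definition Bmat : 'M[R]_(4, 2) := col_mx (0 : 'M[R]_(2, 2)) (1%:M : 'M[R]_2).

Definition asymp_stable (n : nat) (M : 'M[R]_n) : Prop :=
  forall z : R, eigenvalue M z -> 'Re z < 0.

Definition posdef2 (M : 'M[R]_2) : Prop :=
  forall u : 'cV[R]_2, (forall i, u i 0 \is Num.real) -> u != 0 ->
    0 < (u^T *m M *m u) 0 0.

(* d i j = entry (i+1, j+1) of (A - B K)^{-1} in the paper's 1-based notation *)
Definition dentry (ws Rs Rr Ls Lr Lm : R) (K : 'M[R]_(2, 4)) (i j : nat) : R :=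
  invmx (Amat ws Rs Rr Ls Lr Lm - Bmat *m K) (inord i) (inord j).

Definition Qmat (ws Rs Rr Ls Lr Lm : R) (K : 'M[R]_(2, 4)) : 'M[R]_2 :=
  let d := dentry ws Rs Rr Ls Lr Lm K in
  let c := Lm / (sigma Ls Lr Lm * Ls * Lr) in
  let q1 := c * (d 0 2 * d 3 2 - d 1 2 * d 2 2) in
  let q2 := 2^-1 * c * (d 0 2 * d 3 3 + d 0 3 * d 3 2 - d 1 2 * d 2 3 - d 1 3 * d 2 2) in
  let q3 := c * (d 0 3 * d 3 3 - d 1 3 * d 2 3) in
  \matrix_(i < 2, j < 2)
    if (nat_of_ord i == 0%N) && (nat_of_ord j == 0%N) then q1
    else if (nat_of_ord i == 1%N) && (nat_of_ord j == 1%N) then q3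
    else q2.

End DFIG.

From mathcomp Require Import all_boot all_order all_algebra ring.
Set Implicit Arguments. Unset Strict Implicit.
Import Order.TTheory GRing.Theory Num.Theory.
Local Open Scope ring_scope.

(* At steady state the closed-loop state is x = -(A - BK)^-1 B u. As the top block
   of B vanishes, the two stator rows of A annihilate x, and eliminating the rotor
   components with them gives b (x1 x4 - x2 x3) = ws (x1^2 + x2^2) with
   b = Rs Lm / (sigma Ls Lr) > 0. So u^T Q u is a positive multiple of the squared
   norm of the stator part of x, which vanishes only if x = 0, i.e. u = 0.
   Stability is used only to make A - BK invertible. *)

Lemma sum_ord2 (V : nmodType) (F : 'I_2 -> V) :
  \sum_(k < 2) F k = F (inord 0) + F (inord 1).
Proof.
rewrite !big_ord_recl big_ord0 addr0.
by congr (F _ + F _); apply/val_inj; rewrite /= inordK.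
Qed.

Lemma sum_ord4 (V : nmodType) (F : 'I_4 -> V) :
  \sum_(k < 4) F k = F (inord 0) + F (inord 1) + F (inord 2) + F (inord 3).
Proof.
rewrite !big_ord_recl big_ord0 addr0 !addrA.
by congr (F _ + F _ + F _ + F _); apply/val_inj; rewrite /= inordK.
Qed.

Lemma cV4_eq0 (V : nmodType) (v : 'cV[V]_4) :
  v (inord 0) 0 = 0 -> v (inord 1) 0 = 0 -> v (inord 2) 0 = 0 -> v (inord 3) 0 = 0 ->
  v = 0.
Proof.
move=> v0 v1 v2 v3; apply/matrixP => i j; rewrite ord1 mxE -[i]inord_val.
by case: i => [[|[|[|[|k]]]] //].
Qed.

Lemma det_real (R : numDomainType) n (A : 'M[R]_n) :
  (forall i j, A i j \is Num.real) -> \det A \is Num.real.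
Proof.
move=> Areal; apply: rpred_sum => s _.
by rewrite rpredM ?rpredX ?rpredN ?rpred1 //; apply: rpred_prod => i _.
Qed.

Lemma invmx_real (R : numFieldType) n (A : 'M[R]_n) :
  (forall i j, A i j \is Num.real) -> forall i j, invmx A i j \is Num.real.
Proof.
move=> Areal i j; rewrite /invmx; case: (A \in unitmx) => //.
rewrite !mxE rpredM ?rpredV ?det_real // rpredM ?rpredX ?rpredN ?rpred1 ?det_real //.
by move=> k l; rewrite !mxE.
Qed.

Lemma real_sqr_add_gt0 (R : numDomainType) (x y : R) :
  x \is Num.real -> y \is Num.real -> (x != 0) || (y != 0) -> 0 < x ^+ 2 + y ^+ 2.
Proof.
move=> xr yr xy_neq0.
have [x2_ge0 y2_ge0] := (real_exprn_even_ge0 xr (isT : ~~ odd 2),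
                         real_exprn_even_ge0 yr (isT : ~~ odd 2)).
by rewrite lt_def paddr_eq0 // !sqrf_eq0 negb_and xy_neq0 addr_ge0.
Qed.

Lemma cross_of_stator_rows (R : comPzRingType) (a b w x0 x1 x2 x3 : R) :
  - a * x0 + w * x1 + b * x2 = 0 -> - w * x0 - a * x1 + b * x3 = 0 ->
  b * (x0 * x3 - x1 * x2) = w * (x0 ^+ 2 + x1 ^+ 2).
Proof.
move=> row0 row1; apply/eqP; rewrite -subr_eq0; apply/eqP.
have -> : b * (x0 * x3 - x1 * x2) - w * (x0 ^+ 2 + x1 ^+ 2)
        = x0 * (- w * x0 - a * x1 + b * x3) - x1 * (- a * x0 + w * x1 + b * x2).
  by ring.
by rewrite row0 row1 !mulr0 subr0.
Qed.

Lemma stable_unitmx (R : numClosedFieldType) n (M : 'M[R]_n) :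
  asymp_stable M -> M \in unitmx.
Proof.
move=> Mstable; rewrite unitmxE unitfE; apply/det0P => -[v v_neq0 vM0].
have /Mstable : eigenvalue M 0 by apply/eigenvalueP; exists v; rewrite ?scale0r.
by rewrite (Creal_ReP _ (rpred0 _)) ltxx.
Qed.

Lemma sigma_gt0 (R : numClosedFieldType) (Ls Lr Lm : R) :
  0 < Lm -> Lm < Ls -> Lm < Lr -> 0 < sigma Ls Lr Lm.
Proof.
move=> Lm_gt0 Lm_lt_Ls Lm_lt_Lr.
have [Ls_gt0 Lr_gt0] := (lt_trans Lm_gt0 Lm_lt_Ls, lt_trans Lm_gt0 Lm_lt_Lr).
by rewrite subr_gt0 ltr_pdivrMr ?mulr_gt0 // mul1r expr2 ltr_pM // ltW.
Qed.

Section ClosedLoop.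
Variables (R : numClosedFieldType) (ws Rs Rr Ls Lr Lm : R).
Local Notation A := (Amat ws Rs Rr Ls Lr Lm).
Local Notation B := (Bmat R).
Local Notation s := (sigma Ls Lr Lm).

Lemma Bmat_mulmx m (X : 'M[R]_(2, m)) : B *m X = col_mx (0 : 'M_(2, m)) X.
Proof. by rewrite /Bmat (mul_col_mx (0 : 'M_(2, 2))) mul0mx mul1mx. Qed.

Lemma Bmat_mulmx_eq0 m (X : 'M[R]_(2, m)) : (B *m X == 0) = (X == 0).
Proof.
by rewrite Bmat_mulmx; apply: etrans (col_mx_eq0 (0 : 'M_(2, m)) X) _; rewrite eqxx.
Qed.

Lemma Bmat_mulmx_top m (X : 'M[R]_(2, m)) i j : (i < 2)%N -> (B *m X) (inord i) j = 0.
Proof.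
move=> i_lt2; have -> : inord i = lshift 2 (inord i : 'I_2).
  by apply/val_inj; rewrite /= !inordK // (leq_trans i_lt2).
rewrite Bmat_mulmx; apply: etrans (col_mxEu (0 : 'M[R]_(2, m)) X _ j) _; exact: mxE.
Qed.

Lemma Bmat_mulmx_bot m (X : 'M[R]_(2, m)) i j :
  (i < 2)%N -> (B *m X) (inord i.+2) j = X (inord i) j.
Proof.
move=> i_lt2; have -> : inord i.+2 = rshift 2 (inord i : 'I_2).
  by apply/val_inj; rewrite /= !inordK.
by rewrite Bmat_mulmx; exact: (col_mxEd (0 : 'M[R]_(2, m)) X _ j).
Qed.

Lemma closed_loop_stator_rows (K : 'M[R]_(2, 4)) (u : 'cV[R]_2) (w : 'cV[R]_4) :
  (A - B *m K) *m w = B *m u ->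
  - (Rs / (s * Ls)) * w (inord 0) 0 + ws * w (inord 1) 0
    + Rs * Lm / (s * Ls * Lr) * w (inord 2) 0 = 0 /\
  - ws * w (inord 0) 0 - (Rs / (s * Ls)) * w (inord 1) 0
    + Rs * Lm / (s * Ls * Lr) * w (inord 3) 0 = 0.
Proof.
move=> Mw; have Aw : A *m w = B *m (u + K *m w).
  by rewrite mulmxDr mulmxA -Mw mulmxBl subrK.
have row i : (i < 2)%N -> (A *m w) (inord i) 0 = 0.
  by move=> i_lt2; rewrite Aw Bmat_mulmx_top.
by split; [rewrite -(row 0%N) | rewrite -(row 1%N)] => //;
  rewrite mxE sum_ord4 !mxE !inordK //=; ring.
Qed.

Lemma Amat_real : ws \is Num.real -> Rs \is Num.real -> Rr \is Num.real ->
  Ls \is Num.real -> Lr \is Num.real -> Lm \is Num.real ->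
  forall i j, A i j \is Num.real.
Proof.
move=> wsr Rsr Rrr Lsr Lrr Lmr i j.
have sr : s \is Num.real by rewrite /sigma !(rpredB, rpred1, rpredM, rpredV, rpredX).
rewrite /Amat mxE; case: i => [[|[|[|[|?]]]] ?]; case: j => [[|[|[|[|?]]]] ?];
  by rewrite /= ?(rpredM, rpredN, rpredV, rpred0).
Qed.

Lemma Bmat_mulmx_real m (X : 'M[R]_(2, m)) :
  (forall i j, X i j \is Num.real) -> forall i j, (B *m X) i j \is Num.real.
Proof.
by move=> Xr i j; rewrite Bmat_mulmx mxE; case: splitP => k _; rewrite ?mxE ?rpred0.
Qed.

Lemma closed_loop_real (K : 'M[R]_(2, 4)) :
  ws \is Num.real -> Rs \is Num.real -> Rr \is Num.real ->
  Ls \is Num.real -> Lr \is Num.real -> Lm \is Num.real ->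
  (forall i j, K i j \is Num.real) -> forall i j, (A - B *m K) i j \is Num.real.
Proof.
move=> wsr Rsr Rrr Lsr Lrr Lmr Kr i j.
by rewrite mxE [X in _ + X]mxE rpredB ?Amat_real ?Bmat_mulmx_real.
Qed.

(* [w] is minus the steady state x of the paper. *)
Lemma Qmat_quadratic_form (K : 'M[R]_(2, 4)) (u : 'cV[R]_2) :
  let w := invmx (A - B *m K) *m (B *m u) in
  (u^T *m Qmat ws Rs Rr Ls Lr Lm K *m u) 0 0
  = Lm / (s * Ls * Lr) * (w (inord 0) 0 * w (inord 3) 0 - w (inord 1) 0 * w (inord 2) 0).
Proof.
set D := invmx _ => w.
have wE i : w i 0 = D i (inord 2) * u (inord 0) 0 + D i (inord 3) * u (inord 1) 0.
  rewrite mxE sum_ord4 (Bmat_mulmx_bot u (i := 0)) // (Bmat_mulmx_bot u (i := 1)) //.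
  by rewrite !Bmat_mulmx_top // !mulr0 !add0r.
rewrite !wE mxE sum_ord2 !mxE !sum_ord2 !mxE !inordK //= /dentry -/D.
(* Opaque [c] keeps [field] from asking for its denominator to be nonzero. *)
by set c := Lm / _; field.
Qed.

End ClosedLoop.

Theorem lemma1 (R : numClosedFieldType) (ws Rs Rr Ls Lr Lm : R)
  (Hws : ws \is Num.real) (HRs : Rs \is Num.real) (HRr : Rr \is Num.real)
  (HLsr : Ls \is Num.real) (HLrr : Lr \is Num.real) (HLm : Lm \is Num.real)
  (Hws0 : 0 < ws) (HRs0 : 0 < Rs) (HRr0 : 0 < Rr)
  (HLs0 : 0 < Ls) (HLr0 : 0 < Lr) (HLm0 : 0 < Lm)
  (HLs : Lm < Ls) (HLr : Lm < Lr)
  (K : 'M[R]_(2, 4)) (HKreal : forall i j, K i j \is Num.real)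
  (Hstab : asymp_stable (Amat ws Rs Rr Ls Lr Lm - Bmat R *m K)) :
  posdef2 (Qmat ws Rs Rr Ls Lr Lm K).
Proof.
move=> u u_real u_neq0; rewrite Qmat_quadratic_form.
set M := _ - _ *m K; set w := invmx M *m _.
have Mw : M *m w = Bmat R *m u by rewrite mulmxA mulmxV ?mul1mx ?stable_unitmx.
have [row0 row1] := closed_loop_stator_rows Mw.
have s_gt0 := sigma_gt0 HLm0 HLs HLr.
set b := Rs * Lm / _ in row0 row1.
have b_gt0 : 0 < b by rewrite !divr_gt0 ?mulr_gt0.
have w_real i : w i 0 \is Num.real.
  rewrite mxE; apply: rpred_sum => k _.
  rewrite rpredM ?Bmat_mulmx_real //; last by move=> ? j; rewrite ord1.
  exact: (invmx_real (closed_loop_real Hws HRs HRr HLsr HLrr HLm HKreal)).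
have w01_neq0 : (w (inord 0) 0 != 0) || (w (inord 1) 0 != 0).
  apply: contraTT u_neq0; rewrite negb_or !negbK => /andP[/eqP w0 /eqP w1].
  move: row0 row1; rewrite w0 w1 !(mulr0, oppr0, add0r) => /eqP + /eqP.
  rewrite !(mulf_eq0 b) (gt_eqF b_gt0) /= => /eqP w2 /eqP w3.
  by rewrite -Bmat_mulmx_eq0 -Mw (cV4_eq0 w0 w1 w2 w3) mulmx0.
rewrite -(pmulr_rgt0 _ b_gt0) mulrCA (cross_of_stator_rows row0 row1).
by rewrite mulr_gt0 ?divr_gt0 ?mulr_gt0 ?real_sqr_add_gt0.
Qed.
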